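(* Let $r \geq 2$ and $n \geq 1$ be integers, and let $\Gamma$ be an unbalanced signed graph on $n$ vertices that is $\mathcal{K}^-_{r+1}$-free, i.e., $\Gamma$ contains no unbalanced signed complete graph on $r+1$ vertices as a (signed) subgraph. Then the number of edges of $\Gamma$ satisfies $$e(\Gamma) \leq \frac{n(n-1)}{2} - (n - r).$$
   Context: A signed graph $\Gamma=(G,\sigma)$ is a simple graph $G$ (the underlying graph) together with a sign function $\sigma: E(G)\to\{-1,+1\}$. A cycle is positive if it contains an even number of negative edges and negative otherwise; $\Gamma$ is balanced if all its cycles are positive and unbalanced otherwise. $\mathcal{K}^-_{k}$ denotes the set of unbalanced signed complete graphs on $k$ vertices (signed graphs whose underlying graph is $K_k$ and which are unbalanced), and $\Gamma$ is $\mathcal{K}^-_{k}$-free if no subgraph of $\Gamma$, with the inherited signs, belongs to $\mathcal{K}^-_{k}$. $e(\Gamma)$ denotes the number of edges of $\Gamma$. *)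

From mathcomp Require Import all_boot all_order all_algebra.
Set Implicit Arguments. Unset Strict Implicit. Unset Printing Implicit Defensive.

(* A signed graph on vertex type 'I_n: a symmetric irreflexive adjacency
   relation [adj] (the simple underlying graph) and a symmetric relation [neg]
   telling which edges carry sign -1 (its values on non-edges are irrelevant). *)
Definition signed_graph (n : nat) (adj neg : rel 'I_n) : Prop :=
  symmetric adj /\ irreflexive adj /\ symmetric neg.

Definition neg_count (n : nat) (neg : rel 'I_n) (c : seq 'I_n) : nat :=
  count (fun e => neg e.1 e.2) (zip c (rot 1 c)).

Definition is_cycle_in (n : nat) (adj : rel 'I_n) (S : {set 'I_n})
  (c : seq 'I_n) : Prop :=
  [/\ uniq c, 3 <= size c, {subset c <= S} & cycle adj c].

Definition balanced_on (n : nat) (adj neg : rel 'I_n) (S : {set 'I_n}) : Prop :=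
  forall c, is_cycle_in adj S c -> ~~ odd (neg_count neg c).

Definition balanced (n : nat) (adj neg : rel 'I_n) : Prop :=
  balanced_on adj neg setT.

Definition Kminus_free (n : nat) (adj neg : rel 'I_n) (k : nat) : Prop :=
  forall S : {set 'I_n}, #|S| = k ->
    {in S &, forall x y, x != y -> adj x y} -> balanced_on adj neg S.

Definition num_edges (n : nat) (adj : rel 'I_n) : nat :=
  #|[set p : 'I_n * 'I_n | (p.1 < p.2)%N && adj p.1 p.2]|.

From mathcomp Require Import all_boot all_order all_algebra zify.
From Stdlib Require Import Classical.
Import GRing.Theory Num.Theory.
Set Implicit Arguments. Unset Strict Implicit. Unset Printing Implicit Defensive.

(* Let C be a shortest negative cycle.  It suffices to find vertex sets
   A \subset B with #|A| <= r such that every vertex v outside A has a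
   non-neighbour p v, taken in A when v lies in B and in B otherwise: the pairs
   {v, p v} are then n - #|A| distinct non-edges.
   If C is a triangle, extend it to a maximal clique Q on at most r + 1
   vertices; K^-_{r+1}-freeness forces #|Q| <= r, and maximality gives every
   vertex outside Q a non-neighbour in Q, so A = B = Q.
   If C has at least four vertices, it is chordless, since a chord splits it
   into two shorter cycles whose negative edges add up to those of C plus twice
   the chord; likewise a vertex adjacent to four consecutive vertices of C
   splits it into three triangles and a shorter cycle.  Hence A = {x0, x1}, for
   two consecutive vertices x0 x1 of C, and B = V(C) work. *)

Lemma card_ltn_pairs n :
  #|[set q : 'I_n * 'I_n | q.1 < q.2]| = (n * (n - 1)) %/ 2.
Proof.
rewrite divn2 subn1 -bin2 -card_ltn_sorted_tuples.
pose f (q : 'I_n * 'I_n) := [tuple q.1; q.2].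
have inj_f : injective f by move=> [a b] [c d] /(congr1 val) [-> ->].
rewrite -(card_imset _ inj_f); apply: eq_card => t.
rewrite inE; apply/imsetP/idP => [[[a b]] |].
  by rewrite inE /= => ab ->; rewrite /= andbT.
case/tupleP: t => a t; case/tupleP: t => b t; rewrite tuple0 /= andbT => ab.
by exists (a, b); rewrite ?inE //; apply: val_inj.
Qed.

Section NonEdges.

Variables (n : nat) (adj : rel 'I_n).
Hypothesis adj_sym : symmetric adj.

Definition has_nonneighbour_in (X Y : {set 'I_n}) : Prop :=
  {in X, forall v, [exists u in Y, ~~ adj v u]}.

Definition nonedge_layers (A B : {set 'I_n}) : Prop :=
  [/\ A \subset B, has_nonneighbour_in (B :\: A) A
    & has_nonneighbour_in (~: B) B].

Definition nonneighbour (Y : {set 'I_n}) (v : 'I_n) : 'I_n :=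
  odflt v [pick u in Y | ~~ adj v u].

Lemma nonneighbourP (Y : {set 'I_n}) v : [exists u in Y, ~~ adj v u] ->
  nonneighbour Y v \in Y /\ ~~ adj v (nonneighbour Y v).
Proof.
rewrite /nonneighbour; case: pickP => [u /andP[-> ->] // | none].
by case/existsP=> u /andP[uY nu]; have := none u; rewrite uY nu.
Qed.

Lemma num_edges_nonedge_layers (A B : {set 'I_n}) :
  nonedge_layers A B -> num_edges adj + #|~: A| <= (n * (n - 1)) %/ 2.
Proof.
case=> sAB nbA nbB.
pose p v := if v \in B then nonneighbour A v else nonneighbour B v.
have pP v : v \notin A ->
    [/\ p v \in B, v \in B -> p v \in A & ~~ adj v (p v)].
  move=> vA; rewrite /p; case: ifP => vB.
    have /(nbA v)/nonneighbourP[pA np] : v \in B :\: A by rewrite inE vA vB.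
    by rewrite (subsetP sAB).
  by have /(nbB v)/nonneighbourP[pB np] : v \in ~: B by rewrite inE vB.
have p_neq v : v \notin A -> p v != v.
  move=> vA; have [pB pA _] := pP v vA.
  have [/pA|] := boolP (v \in B).
    by apply: contraTneq => ->.
  by apply: contraNneq => <-.
have no_swap v w : v \notin A -> w \notin A -> p v = w -> p w = v -> False.
  move=> vA wA pvw pwv; have [pvB pvA _] := pP v vA; have [_ pwA _] := pP w wA.
  have [/pvA|_] := boolP (v \in B); first by rewrite pvw (negbTE wA).
  by move: vA; rewrite -pwv pwA // -pvw.
pose e (v : 'I_n) := if v < p v then (v, p v) else (p v, v).
have e_inj : {in ~: A &, injective e}.
  move=> v w; rewrite !inE => vA wA; rewrite /e.
  by case: ifP; case: ifP => _ _ [e1 e2] //;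
    case: (no_swap v w vA wA) => //; apply/esym.
set P := [set q : 'I_n * 'I_n | q.1 < q.2].
set E := [set q : 'I_n * 'I_n | adj q.1 q.2].
have -> : num_edges adj = #|P :&: E| by apply: eq_card => q; rewrite !inE.
rewrite -card_ltn_pairs -/P -(cardsID E P) leq_add2l -(card_in_imset e_inj).
apply/subset_leq_card/subsetP => _ /imsetP[v /[!inE] vA ->].
have [_ _ nadj] := pP v vA; have := p_neq v vA.
rewrite /e; case: ltngtP => [vp|pv|/val_inj <-] /=; last by rewrite eqxx.
  by rewrite nadj vp.
by rewrite adj_sym nadj pv.
Qed.

End NonEdges.

Section Cliques.

Variables (n : nat) (adj : rel 'I_n).
Hypothesis adj_sym : symmetric adj.

Definition clique (Q : {set 'I_n}) : bool :=
  [forall x in Q, forall y in Q, (x != y) ==> adj x y].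

Lemma cliqueP (Q : {set 'I_n}) :
  reflect {in Q &, forall x y, x != y -> adj x y} (clique Q).
Proof.
apply: (iffP forall_inP) => [clQ x y xQ yQ | clQ x xQ].
  by move/forall_inP/(_ y yQ): (clQ x xQ) => /implyP.
by apply/forall_inP => y yQ; apply/implyP; apply: clQ.
Qed.

Lemma exists_maximal_clique (T : {set 'I_n}) k : clique T -> #|T| <= k ->
  exists Q : {set 'I_n}, [/\ T \subset Q, clique Q, #|Q| <= k
    & #|Q| < k -> has_nonneighbour_in adj (~: Q) Q].
Proof.
move=> clT Tk; pose P (Q : {set 'I_n}) := [&& T \subset Q, clique Q & #|Q| <= k].
have PT : P T by rewrite /P subxx clT Tk.
case: (arg_maxnP (fun Q : {set 'I_n} => #|Q|) PT) => Q /and3P[TQ clQ Qk] maxQ.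
exists Q; split=> // Qk' v; rewrite inE => vQ; apply: contraT => /exists_inPn allv.
have: P (v |: Q).
  rewrite /P (subset_trans TQ (subsetU1 _ _)) cardsU1 vQ add1n Qk' andbT.
  apply/cliqueP => x y /setU1P[-> | xQ] /setU1P[-> | yQ]; rewrite ?eqxx //.
  - by move=> _; apply/negPn/allv.
  - by move=> _; rewrite adj_sym; apply/negPn/allv.
  - by apply: (cliqueP _ clQ).
by move/maxQ; rewrite cardsU1 vQ /= ltnn.
Qed.

End Cliques.

Section SignedCycles.

Variables (n : nat) (adj neg : rel 'I_n).

Fixpoint neg_walk (x : 'I_n) (s : seq 'I_n) : nat :=
  if s is y :: t then neg x y + neg_walk y t else 0.

Lemma neg_walk_cat x s t :
  neg_walk x (s ++ t) = neg_walk x s + neg_walk (last x s) t.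
Proof. by elim: s x => [|y s IHs] x //=; rewrite IHs addnA. Qed.

Lemma neg_walk_rcons x s y :
  neg_walk x (rcons s y) = neg_walk x s + neg (last x s) y.
Proof. by rewrite -cats1 neg_walk_cat /= addn0. Qed.

Lemma neg_count_cons x s : neg_count neg (x :: s) = neg_walk x (rcons s x).
Proof.
rewrite /neg_count rot1_cons; move: {2 4}x.
by elim: s x => [|z s IHs] x y /=; last rewrite IHs.
Qed.

Lemma neg_count_rot1 c : neg_count neg (rot 1 c) = neg_count neg c.
Proof.
case: c => [|x [|y s]] //; rewrite rot1_cons !neg_count_cons /=.
by rewrite !neg_walk_rcons last_rcons; lia.
Qed.

Definition graph_cycle (c : seq 'I_n) : bool :=
  [&& uniq c, 3 <= size c & cycle adj c].

Lemma graph_cycle_rot k c : graph_cycle (rot k c) = graph_cycle c.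
Proof. by rewrite /graph_cycle rot_uniq size_rot rot_cycle. Qed.

Lemma graph_cycle_in (S : {set 'I_n}) c :
  graph_cycle c -> {subset c <= S} -> is_cycle_in adj S c.
Proof. by case/and3P. Qed.

Definition negative_cycle (c : seq 'I_n) : bool :=
  graph_cycle c && odd (neg_count neg c).

Definition shortest_negative_cycle (c : seq 'I_n) : Prop :=
  negative_cycle c /\ forall c', negative_cycle c' -> size c <= size c'.

Lemma exists_shortest_negative_cycle :
  ~ balanced adj neg -> exists c, shortest_negative_cycle c.
Proof.
move=> unbalanced.
have [c0 neg_c0] : exists c, negative_cycle c.
  apply: NNPP => none; apply: unbalanced => c [uc sc _ cc].
  apply/negP => oc; apply: none; exists c.
  by rewrite /negative_cycle /graph_cycle uc sc cc.
have ex_size : exists k, [exists t : k.-tuple 'I_n, negative_cycle t].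
  by exists (size c0); apply/existsP; exists (in_tuple c0).
case: (ex_minnP ex_size) => k /existsP[t neg_t] min_k.
exists t; split=> // c neg_c; rewrite size_tuple.
by apply: min_k; apply/existsP; exists (in_tuple c).
Qed.

Lemma shortest_negative_cycle_rot1 c :
  shortest_negative_cycle c -> shortest_negative_cycle (rot 1 c).
Proof.
rewrite /shortest_negative_cycle /negative_cycle.
by rewrite graph_cycle_rot neg_count_rot1 size_rot.
Qed.

Lemma shorter_cycle_even c c' :
  shortest_negative_cycle c -> graph_cycle c' -> size c' < size c ->
  ~~ odd (neg_count neg c').
Proof.
case=> _ min_c cyc' lt; apply/negP => odd'.
by have := min_c c'; rewrite /negative_cycle cyc' odd' leqNgt lt => /(_ isT).
Qed.

Hypotheses (adj_sym : symmetric adj) (neg_sym : symmetric neg).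

Lemma graph_cycle_chordl x s1 y s2 :
  graph_cycle (x :: s1 ++ y :: s2) -> adj x y -> s1 != [::] ->
  graph_cycle (x :: rcons s1 y).
Proof.
case/and3P=> uc _ cc axy ne1; apply/and3P; split.
- by apply: subseq_uniq uc; rewrite -cat_rcons; exact: prefix_subseq.
- by rewrite /= size_rcons !ltnS lt0n size_eq0.
move: cc; rewrite /= rcons_cat cat_path /= => /and3P[ps1 ay _].
by rewrite !rcons_path last_rcons ps1 ay adj_sym.
Qed.

Lemma neg_count_chord x s1 y s2 :
  neg_count neg (x :: rcons s1 y) + neg_count neg (y :: rcons s2 x) =
  neg_count neg (x :: s1 ++ y :: s2) + (neg x y).*2.
Proof.
rewrite !neg_count_cons rcons_cat neg_walk_cat /= !neg_walk_rcons !last_rcons.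
by rewrite (neg_sym y x); lia.
Qed.

Lemma shortest_negative_cycle_chordless x s1 y s2 :
  shortest_negative_cycle (x :: s1 ++ y :: s2) -> s1 != [::] -> s2 != [::] ->
  ~~ adj x y.
Proof.
move=> short ne1 ne2; apply/negP => axy.
have [/andP[cyc_c odd_c] _] := short.
have cyc1 := graph_cycle_chordl cyc_c axy ne1.
have cyc2 : graph_cycle (y :: rcons s2 x).
  apply: (graph_cycle_chordl (s2 := s1)) ne2; last by rewrite adj_sym.
  by rewrite -(graph_cycle_rot (size (x :: s1))) -cat_cons rot_size_cat in cyc_c.
have [l1 l2] : 0 < size s1 /\ 0 < size s2 by rewrite !lt0n !size_eq0.
have even1 : ~~ odd (neg_count neg (x :: rcons s1 y)).
  by apply: shorter_cycle_even short cyc1 _; rewrite /= size_rcons size_cat /=; lia.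
have even2 : ~~ odd (neg_count neg (y :: rcons s2 x)).
  by apply: shorter_cycle_even short cyc2 _; rewrite /= size_rcons size_cat /=; lia.
move/(congr1 odd): (neg_count_chord x s1 y s2).
by rewrite !oddD odd_double (negbTE even1) (negbTE even2) odd_c.
Qed.

Lemma shortest_negative_cycle_nonadjacent x0 x1 t v :
  shortest_negative_cycle (x0 :: x1 :: t) -> 2 <= size t -> v \in t ->
  ~~ adj v x0 || ~~ adj v x1.
Proof.
move=> short size_t /splitPr E; case: E short size_t => t1 [|y t2] short size_t.
  have ne1 : t1 != [::] by case: t1 {short} size_t.
  move/shortest_negative_cycle_rot1: short; rewrite rot1_cons /= rcons_cat /=.
  by move/shortest_negative_cycle_chordless => /(_ ne1 isT); rewrite adj_sym orbC => ->.
move/(shortest_negative_cycle_chordless (s1 := x1 :: t1)): short => /(_ isT isT).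
by rewrite adj_sym => ->.
Qed.

(* The triangles v x0 x1, v x1 x2, v x2 x3 and the cycle v x3 ... x0 use each
   edge of x0 x1 x2 x3 ... once and each spoke v xi twice. *)
Lemma neg_count_fan v x0 x1 x2 x3 s :
  neg_count neg [:: v; x0; x1] + neg_count neg [:: v; x1; x2] +
  neg_count neg [:: v; x2; x3] + neg_count neg (v :: x3 :: rcons s x0) =
  neg_count neg [:: x0, x1, x2, x3 & s] +
  (neg v x0 + neg v x1 + neg v x2 + neg v x3).*2.
Proof.
rewrite !neg_count_cons /= !neg_walk_rcons /= last_rcons.
by rewrite (neg_sym x0 v) (neg_sym x1 v) (neg_sym x2 v) (neg_sym x3 v); lia.
Qed.

Lemma shortest_negative_cycle_nonneighbour c v :
  shortest_negative_cycle c -> 4 <= size c -> v \notin c -> ~~ all (adj v) c.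
Proof.
case: c => [|x0 [|x1 [|x2 [|x3 s]]]] // short _ vc.
apply/negP => /and5P[a0 a1 a2 a3 _].
have [/and3P[uc _ cc] odd_c] := andP (proj1 short).
move: vc; rewrite !inE !negb_or => /and5P[v0 v1 v2 v3 vs].
move: uc => /= /and5P[]; rewrite !inE !negb_or.
move=> /and4P[d01 d02 d03 x0s] /and3P[d12 d13 x1s] /andP[d23 x2s] x3s us.
move: cc; rewrite /= rcons_path => /and4P[b01 b12 b23 /andP[ps bl]].
have tri x y : v != x -> v != y -> x != y -> adj v x -> adj x y -> adj v y ->
    ~~ odd (neg_count neg [:: v; x; y]).
  move=> vx vy xy vxa xya vya; apply: shorter_cycle_even short _ _ => //.
  by rewrite /graph_cycle /= !inE !negb_or vx vy xy vxa xya adj_sym vya.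
have even4 : ~~ odd (neg_count neg (v :: x3 :: rcons s x0)).
  apply: shorter_cycle_even short _ _; last by rewrite /= size_rcons.
  rewrite /graph_cycle /= !inE !mem_rcons !inE !negb_or rcons_uniq size_rcons.
  rewrite v3 v0 vs x0s x3s us eq_sym d03 /= !rcons_path ps last_rcons bl a3.
  by rewrite adj_sym a0.
move/(congr1 odd): (neg_count_fan v x0 x1 x2 x3 s).
rewrite 4!oddD odd_double (negbTE even4) odd_c.
by rewrite (negbTE (tri x0 x1 v0 v1 d01 a0 b01 a1))
  (negbTE (tri x1 x2 v1 v2 d12 a1 b12 a2)) (negbTE (tri x2 x3 v2 v3 d23 a2 b23 a3)).
Qed.

End SignedCycles.

Section NonEdgeLayers.

Variables (n : nat) (adj neg : rel 'I_n).
Hypotheses (adj_sym : symmetric adj) (neg_sym : symmetric neg).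

Lemma nonedge_layers_of_negative_triangle r x0 x1 x2 :
  2 <= r -> Kminus_free adj neg r.+1 -> negative_cycle adj neg [:: x0; x1; x2] ->
  exists A : {set 'I_n}, #|A| <= r /\ nonedge_layers adj A A.
Proof.
move=> r2 free /andP[cyc_c odd_c].
have /and3P[uc _ /and4P[a01 a12 a20 _]] := cyc_c.
set T := [set x in [:: x0; x1; x2]].
have clT : clique adj T.
  apply/cliqueP => x y; rewrite !inE => /or3P[]/eqP-> /or3P[]/eqP->;
    rewrite ?eqxx // => _; by rewrite // adj_sym.
have Tr : #|T| <= r.+1 by rewrite cardsE (card_uniqP uc).
have [Q [TQ clQ Qr nbQ]] := exists_maximal_clique adj_sym clT Tr.
have Qlt : #|Q| < r.+1.
  rewrite ltn_neqAle Qr andbT; apply/eqP => Qr1.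
  have cycQ : is_cycle_in adj Q [:: x0; x1; x2].
    by apply: graph_cycle_in => // x xc; apply: (subsetP TQ); rewrite inE.
  by move/cliqueP: clQ => /(free Q Qr1)/(_ _ cycQ); rewrite odd_c.
exists Q; split=> //; split.
- exact: subxx.
- by move=> v; rewrite setDv inE.
- exact: nbQ.
Qed.

Lemma nonedge_layers_of_shortest_negative_cycle c :
  shortest_negative_cycle adj neg c -> 4 <= size c ->
  exists A B : {set 'I_n}, #|A| <= 2 /\ nonedge_layers adj A B.
Proof.
case: c => [|x0 [|x1 t]] // short size_c.
exists [set x0; x1], [set x in x0 :: x1 :: t]; split.
  by rewrite cards2 ltnS leq_b1.
split.
- by apply/subsetP => x; rewrite !inE => /orP[]/eqP->; rewrite eqxx ?orbT.
- move=> v; rewrite !inE negb_or => /andP[/andP[v0 v1]].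
  rewrite (negbTE v0) (negbTE v1) /= => vt.
  have := shortest_negative_cycle_nonadjacent adj_sym neg_sym short size_c vt.
  case/orP => nv; apply/exists_inP; [exists x0 | exists x1];
    by rewrite ?inE ?eqxx ?orbT.
- move=> v; rewrite in_setC inE => vc.
  have /allPn[u uc nu] :=
    shortest_negative_cycle_nonneighbour adj_sym neg_sym short size_c vc.
  by apply/exists_inP; exists u; rewrite ?inE.
Qed.

Lemma exists_nonedge_layers r :
  2 <= r -> ~ balanced adj neg -> Kminus_free adj neg r.+1 ->
  exists A B : {set 'I_n}, #|A| <= r /\ nonedge_layers adj A B.
Proof.
move=> r2 unbalanced free.
have [c short] := exists_shortest_negative_cycle unbalanced.
have [/andP[/and3P[_ size_c _] _] _] := short.
case: c short size_c => [|x0 [|x1 [|x2 [|x3 s]]]] // short _.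
  have [A [Ar layers]] := nonedge_layers_of_negative_triangle r2 free (proj1 short).
  by exists A, A.
have [A [B [A2 layers]]] := nonedge_layers_of_shortest_negative_cycle short isT.
by exists A, B; split=> //; apply: leq_trans A2 r2.
Qed.

End NonEdgeLayers.

Local Open Scope ring_scope.

Theorem theorem1p7 (r n : nat) (adj neg : rel 'I_n) :
  (2 <= r)%N -> (1 <= n)%N ->
  signed_graph adj neg ->
  ~ balanced adj neg ->
  Kminus_free adj neg r.+1 ->
  (num_edges adj)%:Z <= ((n * (n - 1))%N %/ 2)%:Z - (n%:Z - r%:Z).
Proof.
move=> r2 _ [adj_sym [_ neg_sym]] unbalanced free.
have [A [B [Ar layers]]] := exists_nonedge_layers adj_sym neg_sym r2 unbalanced free.
have := num_edges_nonedge_layers adj_sym layers.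
have := cardsC A; rewrite card_ord.
lia.
Qed.
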